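(* Let $z\in\mathbb{C}$ with $|z|>1$ and let $t\ge 2$ be an integer. Then $$\lim_{n\to\infty}\frac{l_{2^{t-1}n+2^{t-2}}(z)}{l_{2^{t-1}n+2^{t-2}-1}(z)}=\frac{(z^2-1)F_{t-1}(z)}{F_{t-1}(z)-2}.$$ In particular $\lim_{n\to\infty} l_{2n+1}(z)/l_{2n}(z)=z^2+1$, $\lim_{n\to\infty} l_{4n+2}(z)/l_{4n+1}(z)=\frac{z^4+1}{z^2+1}$, and $\lim_{n\to\infty} l_{8n+4}(z)/l_{8n+3}(z)=\frac{z^8+1}{(z^4+1)(z^2+1)}$.
   Context: For $n\ge0$ and $z\in\mathbb{C}$, $p_n(z)=\frac12\sum_{i=0}^{n}\left(1-(-1)^{\binom{n}{i}}\right)z^i$, i.e. the sum of $z^i$ over those $i\in\{0,\dots,n\}$ with $\binom{n}{i}$ odd. The polynomial $p_{2n}(z)-1$ is divisible by $z^2$, and $l_n(z)=\frac{p_{2n}(z)-1}{z^2}$. $F_k(z)=z^{2^k}+1$. *)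

From Stdlib Require Import Reals List Arith.
From Coquelicot Require Import Coquelicot.
Open Scope C_scope.

Fixpoint binom (n k : nat) : nat :=
  match n, k with
  | _, O => 1%nat
  | O, S _ => 0%nat
  | S n', S k' => (binom n' k' + binom n' k)%nat
  end.

Fixpoint cpow (z : C) (k : nat) : C :=
  match k with O => RtoC 1 | S k' => z * cpow z k' end.

Definition p (n : nat) (z : C) : C :=
  fold_right Cplus (RtoC 0)
    (map (fun i => if Nat.odd (binom n i) then cpow z i else RtoC 0) (seq 0 (S n))).

Definition l (n : nat) (z : C) : C := (p (2 * n) z - RtoC 1) / cpow z 2.

Definition F (k : nat) (z : C) : C := cpow z (2 ^ k) + RtoC 1.

From Stdlib Require Import Reals Lia Lra List Arith.
From Coquelicot Require Import Coquelicot.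
Open Scope C_scope.

(** By Lucas' theorem modulo 2, [p_(2m)(z) = p_m(z^2)] and [p_(2m+1)(z) = (1+z) p_m(z^2)],
    so [p_(2^j q + r)(z) = p_r(z) p_q(z^(2^j))] for [r < 2^j].  Writing [w = z^2] and
    [s = t-2], the numerator and denominator of the ratio are therefore
    [((1 + w^(2^s)) P_n - 1)/w] and [(p_(2^s-1)(w) P_n - 1)/w] with the common factor
    [P_n = p_n(w^(2^(s+1)))], while [(w-1) p_(2^s-1)(w) = w^(2^s) - 1].  For [|u| > 1],
    [|p_n(u)|] grows at least linearly in [n]: split off the lowest [k] binary digits of [n],
    with [k] so large that [|u|^(2^k) >= 2].  Hence the constants [-1] become negligible. *)

Lemma binom_0_r n : binom n 0 = 1%nat.
Proof. now destruct n. Qed.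

Lemma binom_1_r n : binom n 1 = n.
Proof.
  induction n as [|n IH]; [reflexivity|].
  cbn [binom]. rewrite binom_0_r, IH. reflexivity.
Qed.

Lemma binom_gt n k : (n < k)%nat -> binom n k = 0%nat.
Proof.
  revert k; induction n as [|n IH]; intros [|k] Hk; cbn [binom]; try lia.
  rewrite !IH; lia.
Qed.

Lemma odd_binom_SS n k :
  Nat.odd (binom (S (S n)) (S (S k)))
  = xorb (Nat.odd (binom n k)) (Nat.odd (binom n (S (S k)))).
Proof.
  cbn [binom].
  replace (binom n k + binom n (S k) + (binom n (S k) + binom n (S (S k))))%nat
    with (binom n k + binom n (S (S k)) + 2 * binom n (S k))%nat by lia.
  now rewrite Nat.odd_add_mul_2, Nat.odd_add.
Qed.

Lemma odd_binom_double m k :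
  Nat.odd (binom (2 * m) (2 * k)) = Nat.odd (binom m k) /\
  Nat.odd (binom (2 * m) (S (2 * k))) = false.
Proof.
  revert k; induction m as [|m IH]; intros [|k]; try (split; reflexivity).
  - change (S (2 * 0)) with 1%nat. rewrite binom_1_r, Nat.odd_mul.
    split; reflexivity.
  - replace (2 * S m)%nat with (S (S (2 * m))) by lia.
    replace (2 * S k)%nat with (S (S (2 * k))) by lia.
    destruct (IH k) as [Ek Ok], (IH (S k)) as [ESk OSk].
    replace (2 * S k)%nat with (S (S (2 * k))) in ESk, OSk by lia.
    rewrite !odd_binom_SS, Ek, ESk, Ok, OSk.
    cbn [binom]. now rewrite Nat.odd_add.
Qed.

Lemma odd_binom_double_succ m k :
  Nat.odd (binom (S (2 * m)) (2 * k)) = Nat.odd (binom m k) /\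
  Nat.odd (binom (S (2 * m)) (S (2 * k))) = Nat.odd (binom m k).
Proof.
  split.
  - destruct k as [|k]; [now rewrite Nat.mul_0_r, !binom_0_r|].
    destruct (odd_binom_double m k) as [_ Ok], (odd_binom_double m (S k)) as [ESk _].
    replace (2 * S k)%nat with (S (S (2 * k))) in ESk by lia.
    replace (2 * S k)%nat with (S (S (2 * k))) by lia.
    cbn [binom]. now rewrite Nat.odd_add, Ok, ESk.
  - destruct (odd_binom_double m k) as [Ek Ok].
    cbn [binom]. rewrite Nat.odd_add, Ek, Ok. apply Bool.xorb_false_r.
Qed.

Fixpoint csum (f : nat -> C) (N : nat) : C :=
  match N with O => 0 | S N' => f O + csum (fun i => f (S i)) N' end.

Lemma csum_ext N (f g : nat -> C) :
  (forall i, (i < N)%nat -> f i = g i) -> csum f N = csum g N.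
Proof.
  revert f g; induction N as [|N IH]; intros f g Hfg; simpl; [reflexivity|].
  rewrite Hfg by lia. f_equal. apply IH. intros i Hi. apply Hfg. lia.
Qed.

Lemma csum_pad N k (f : nat -> C) :
  (forall i, (N <= i)%nat -> f i = 0) -> csum f (N + k) = csum f N.
Proof.
  revert f; induction N as [|N IH]; intros f Hf; simpl.
  - revert f Hf; induction k as [|k IHk]; intros f Hf; simpl; [reflexivity|].
    rewrite Hf by lia. rewrite IHk by (intros; apply Hf; lia). apply Cplus_0_l.
  - f_equal. apply IH. intros i Hi. apply Hf. lia.
Qed.

Lemma csum_pairs N (f : nat -> C) :
  csum f (2 * N) = csum (fun j => f (2 * j)%nat + f (S (2 * j))) N.
Proof.
  revert f; induction N as [|N IH]; intros f; [reflexivity|].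
  replace (2 * S N)%nat with (S (S (2 * N))) by lia.
  simpl csum. rewrite IH, Cplus_assoc. f_equal.
  apply csum_ext. intros i _. f_equal; f_equal; lia.
Qed.

Lemma csum_scal N c (f : nat -> C) : csum (fun i => c * f i) N = c * csum f N.
Proof.
  revert f; induction N as [|N IH]; intros f; simpl; [ring|].
  rewrite (IH (fun i => f (S i))). ring.
Qed.

Lemma fold_right_map_seq N s (f : nat -> C) :
  fold_right Cplus 0 (map f (seq s N)) = csum (fun i => f (s + i)%nat) N.
Proof.
  revert s; induction N as [|N IH]; intros s; simpl; [reflexivity|].
  rewrite Nat.add_0_r, IH. f_equal. apply csum_ext. intros i _. f_equal. lia.
Qed.

Lemma cpow_add z a b : cpow z (a + b) = cpow z a * cpow z b.
Proof. induction a as [|a IH]; simpl; [ring|]. rewrite IH. ring. Qed.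

Lemma cpow_mul z a b : cpow z (a * b) = cpow (cpow z a) b.
Proof.
  induction b as [|b IH]; simpl; [now rewrite Nat.mul_0_r|].
  now rewrite Nat.mul_succ_r, cpow_add, IH, Cmult_comm.
Qed.

Lemma Cmod_cpow z k : Cmod (cpow z k) = (Cmod z ^ k)%R.
Proof.
  induction k as [|k IH]; simpl; [apply Cmod_1|]. now rewrite Cmod_mult, IH.
Qed.

Lemma Cmod_cpow_gt_1 z k : (1 < Cmod z)%R -> (0 < k)%nat -> (1 < Cmod (cpow z k))%R.
Proof. intros. rewrite Cmod_cpow. now apply Rlt_pow_R1. Qed.

Lemma Cmod_triangle_rev x y : (Cmod x - Cmod y <= Cmod (x + y))%R.
Proof.
  pose proof (Cmod_triangle (x + y) (- y)) as H.
  rewrite Cmod_opp in H. replace (x + y + - y) with x in H by ring. lra.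
Qed.

Lemma Cminus_neq_0 x c : (Cmod c < Cmod x)%R -> x - c <> 0.
Proof.
  intros Hcx E. pose proof (Cmod_triangle_rev x (- c)) as H.
  rewrite Cmod_opp in H. change (x + - c) with (x - c) in H.
  rewrite E, Cmod_0 in H. lra.
Qed.

Definition pterm (n : nat) (z : C) (i : nat) : C :=
  if Nat.odd (binom n i) then cpow z i else 0.

Lemma p_as_csum n z N : (S n <= N)%nat -> p n z = csum (pterm n z) N.
Proof.
  intros HN. unfold p. rewrite fold_right_map_seq.
  replace N with (S n + (N - S n))%nat by lia. rewrite csum_pad; [reflexivity|].
  intros i Hi. unfold pterm. now rewrite binom_gt by lia.
Qed.

Lemma p_0 z : p 0 z = 1.
Proof. unfold p; simpl. ring. Qed.

Lemma p_double m z : p (2 * m) z = p m (cpow z 2).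
Proof.
  rewrite (p_as_csum (2 * m) z (2 * S m)), csum_pairs, (p_as_csum m _ (S m)) by lia.
  apply csum_ext. intros j _. unfold pterm.
  destruct (odd_binom_double m j) as [-> ->].
  rewrite <- cpow_mul. destruct (Nat.odd (binom m j)); ring.
Qed.

Lemma p_double_succ m z : p (S (2 * m)) z = (1 + z) * p m (cpow z 2).
Proof.
  rewrite (p_as_csum (S (2 * m)) z (2 * S m)), csum_pairs, (p_as_csum m _ (S m)) by lia.
  rewrite <- csum_scal. apply csum_ext. intros j _. unfold pterm.
  destruct (odd_binom_double_succ m j) as [-> ->].
  rewrite <- cpow_mul. destruct (Nat.odd (binom m j)); simpl; ring.
Qed.

Lemma p_dyadic j q r u :
  (r < 2 ^ j)%nat -> p (2 ^ j * q + r) u = p r u * p q (cpow u (2 ^ j)).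
Proof.
  revert r u; induction j as [|j IH]; intros r u Hr.
  - simpl in Hr. replace r with 0%nat by lia.
    rewrite Nat.pow_0_r, Nat.mul_1_l, Nat.add_0_r, p_0. simpl.
    now rewrite Cmult_1_r, Cmult_1_l.
  - rewrite Nat.pow_succ_r' in Hr |- *.
    destruct (Nat.Even_or_Odd r) as [[r' ->]|[r' ->]].
    + replace (2 * 2 ^ j * q + 2 * r')%nat with (2 * (2 ^ j * q + r'))%nat by lia.
      rewrite !p_double, IH by lia. now rewrite <- !cpow_mul.
    + replace (2 * 2 ^ j * q + (2 * r' + 1))%nat with (S (2 * (2 ^ j * q + r'))) by lia.
      rewrite Nat.add_1_r, !p_double_succ, IH by lia. rewrite <- !cpow_mul. ring.
Qed.

Lemma p_pow2 s w : p (2 ^ s) w = 1 + cpow w (2 ^ s).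
Proof.
  pose proof (Nat.pow_nonzero 2 s ltac:(lia)).
  replace (2 ^ s)%nat with (2 ^ s * 1 + 0)%nat at 1 by lia.
  rewrite p_dyadic, p_0 by lia.
  change 1%nat with (S (2 * 0)). rewrite p_double_succ, p_0. ring.
Qed.

Lemma p_pow2_pred s w : (w - 1) * p (2 ^ s - 1) w = cpow w (2 ^ s) - 1.
Proof.
  revert w; induction s as [|s IH]; intros w.
  - simpl. rewrite p_0. ring.
  - pose proof (Nat.pow_nonzero 2 s ltac:(lia)).
    replace (2 ^ S s - 1)%nat with (S (2 * (2 ^ s - 1))) by (rewrite Nat.pow_succ_r'; lia).
    rewrite p_double_succ, Nat.pow_succ_r', cpow_mul, <- IH. simpl. ring.
Qed.

Lemma nat_binary_ind (P : nat -> Prop) :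
  P 0%nat -> (forall m, P m -> P (2 * m)%nat) ->
  (forall m, P m -> P (2 * m)%nat -> P (S (2 * m))) ->
  forall n, P n.
Proof.
  intros H0 Heven Hodd n. induction n as [n IH] using lt_wf_ind.
  destruct n as [|n]; [exact H0|].
  destruct (Nat.Even_or_Odd (S n)) as [[m Hm]|[m Hm]]; rewrite Hm.
  - apply Heven, IH. lia.
  - rewrite Nat.add_1_r. assert (Hm' : P m) by (apply IH; lia).
    apply Hodd; [|apply Heven]; exact Hm'.
Qed.

Lemma Cmod_1_plus_ge v : (Cmod v - 1 <= Cmod (1 + v))%R.
Proof. rewrite Cplus_comm, <- Cmod_1 at 1. apply Cmod_triangle_rev. Qed.

Lemma Rmin_1_pred_sqr_le a : (1 < a)%R -> (Rmin 1 (a - 1) ^ 2 <= Rmin 1 (a ^ 2 - 1))%R.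
Proof.
  intros Ha. pose proof (Rmin_l 1 (a - 1)). pose proof (Rmin_r 1 (a - 1)).
  assert (0 < Rmin 1 (a - 1))%R by (apply Rmin_glb_lt; lra).
  apply Rmin_glb; nra.
Qed.

(* The factor [1 + v] may be tiny, but it enters once per binary digit of [n]; this
   crude bound is only needed for boundedly many [n]. *)
Lemma p_ge_pow n v : (1 < Cmod v)%R -> (Rmin 1 (Cmod v - 1) ^ n <= Cmod (p n v))%R.
Proof.
  revert v; induction n as [|m IH|m _ IH2] using nat_binary_ind; intros v Hv.
  - rewrite p_0, Cmod_1. simpl. lra.
  - assert (Hv2 : (1 < Cmod (cpow v 2))%R) by (apply Cmod_cpow_gt_1; [lra | lia]).
    rewrite p_double, pow_mult.
    eapply Rle_trans; [apply pow_incr | apply IH, Hv2].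
    rewrite Cmod_cpow. split; [apply pow_le, Rmin_glb; lra | now apply Rmin_1_pred_sqr_le].
  - rewrite p_double_succ, <- p_double, Cmod_mult. simpl pow.
    apply Rmult_le_compat; [apply Rmin_glb; lra | apply pow_le, Rmin_glb; lra | | now apply IH2].
    pose proof (Cmod_1_plus_ge v). pose proof (Rmin_r 1 (Cmod v - 1)). lra.
Qed.

Lemma p_ge_linear n v : (2 <= Cmod v)%R -> (INR n * (Cmod v - 1) <= Cmod (p n v))%R.
Proof.
  revert v; induction n as [|m IH|m IH _] using nat_binary_ind; intros v Hv.
  { rewrite p_0, Cmod_1. simpl. lra. }
  all: assert (Hv2 : (2 <= Cmod (cpow v 2))%R) by (rewrite Cmod_cpow; simpl; nra).
  all: specialize (IH _ Hv2); rewrite Cmod_cpow in IH.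
  all: pose proof (pos_INR m).
  - rewrite p_double, mult_INR. simpl INR.
    assert (0 <= INR m * ((Cmod v - 1) * (Cmod v - 1)))%R
      by (apply Rmult_le_pos, Rle_0_sqr; lra).
    nra.
  - rewrite p_double_succ, Cmod_mult, S_INR, mult_INR. simpl INR.
    pose proof (Cmod_1_plus_ge v).
    destruct m as [|m].
    + rewrite p_0, Cmod_1. simpl. lra.
    + rewrite S_INR in *.
      apply Rle_trans with ((Cmod v - 1) * (2 * (INR m + 1) + 1))%R; [lra|].
      assert (3 <= Cmod v ^ 2 - 1)%R by nra.
      pose proof (pos_INR m). apply Rmult_le_compat; nra.
Qed.

Lemma p_ge_mul_div u k n :
  (1 < Cmod u)%R -> (2 <= Cmod u ^ 2 ^ k)%R ->
  (Rmin 1 (Cmod u - 1) ^ 2 ^ k * INR (n / 2 ^ k) <= Cmod (p n u))%R.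
Proof.
  intros Hu Hk.
  pose proof (Nat.pow_nonzero 2 k ltac:(lia)) as H2k.
  set (q := (n / 2 ^ k)%nat). set (r := (n mod 2 ^ k)%nat).
  assert (Hr : (r < 2 ^ k)%nat) by now apply Nat.mod_upper_bound.
  assert (Hn : p n u = p r u * p q (cpow u (2 ^ k))).
  { rewrite (Nat.div_mod n (2 ^ k)) at 1 by exact H2k. now apply p_dyadic. }
  rewrite Hn, Cmod_mult.
  set (d := Rmin 1 (Cmod u - 1)).
  assert (Hd : (0 < d <= 1)%R) by (split; [apply Rmin_glb_lt | apply Rmin_l]; lra).
  apply Rmult_le_compat; [apply pow_le; lra | apply pos_INR | |].
  - apply Rle_trans with (d ^ r)%R; [|apply p_ge_pow, Hu].
    replace (2 ^ k)%nat with (r + (2 ^ k - r))%nat by lia.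
    rewrite pow_add. pose proof (pow_le d r ltac:(lra)).
    assert (d ^ (2 ^ k - r) <= 1)%R by (rewrite <- (pow1 (2 ^ k - r)); apply pow_incr; lra).
    nra.
  - pose proof (p_ge_linear q (cpow u (2 ^ k))) as Hq.
    rewrite Cmod_cpow in Hq. pose proof (pos_INR q). specialize (Hq Hk). nra.
Qed.

Lemma p_unbounded u :
  (1 < Cmod u)%R -> forall M, eventually (fun n => (M <= Cmod (p n u))%R).
Proof.
  intros Hu M.
  destruct (Pow_x_infinity (Cmod u) ltac:(rewrite Rabs_pos_eq; lra) 2%R) as [k Hk].
  assert (H2 : (2 <= Cmod u ^ 2 ^ k)%R).
  { specialize (Hk (2 ^ k)%nat (Nat.lt_le_incl _ _ (Nat.pow_gt_lin_r 2 k ltac:(lia)))).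
    rewrite Rabs_pos_eq in Hk by (apply pow_le; lra). lra. }
  set (c := (Rmin 1 (Cmod u - 1) ^ 2 ^ k)%R).
  assert (Hc : (0 < c)%R) by (apply pow_lt, Rmin_glb_lt; lra).
  destruct (INR_unbounded (M / c)) as [K HK].
  exists (2 ^ k * K)%nat. intros n Hn.
  assert (HKn : (K <= n / 2 ^ k)%nat)
    by (apply Nat.div_le_lower_bound; [apply Nat.pow_nonzero|]; lia).
  apply le_INR in HKn.
  pose proof (p_ge_mul_div u k n Hu H2). fold c in H.
  assert (M < c * INR K)%R.
  { replace M with (c * (M / c))%R by (field; lra). apply Rmult_lt_compat_l; lra. }
  nra.
Qed.

Lemma filterlim_affine_ratio (Q : nat -> C) (A B : C) :
  B <> 0 -> (forall M, eventually (fun n => (M <= Cmod (Q n))%R)) ->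
  filterlim (fun n => (A * Q n - 1) / (B * Q n - 1)) eventually (locally (A / B)).
Proof.
  intros HB HQ.
  apply (proj2 (@filterlim_locally_ball_norm _ _ C_NormedModule _ _ _ _)). intros [e He].
  set (D := Cmod (A - B)). set (g := Cmod B).
  assert (Hg : (0 < g)%R) by now apply Cmod_gt_0.
  assert (HD : (0 <= D)%R) by apply Cmod_ge_0.
  generalize (HQ ((D / (g * e) + 2) / g)%R). apply filter_imp. intros n Hn.
  set (X := Cmod (B * Q n - 1)).
  assert (HX : (D / (g * e) + 1 <= X)%R).
  { pose proof (Cmod_triangle_rev (B * Q n) (Copp 1)) as Htri.
    rewrite Cmod_opp, Cmod_1, Cmod_mult in Htri. fold g in Htri.
    apply (Rmult_le_compat_l g) in Hn; [|lra].
    replace (g * ((D / (g * e) + 2) / g))%R with (D / (g * e) + 2)%R in Hn by (field; lra).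
    unfold X, Cminus. lra. }
  assert (HDe : (0 <= D / (g * e))%R) by (apply Rdiv_le_0_compat; nra).
  assert (HBQ : B * Q n - 1 <> 0) by (intro E; unfold X in HX; rewrite E, Cmod_0 in HX; lra).
  change (Cmod ((A * Q n - 1) / (B * Q n - 1) - A / B) < e)%R.
  replace ((A * Q n - 1) / (B * Q n - 1) - A / B) with ((A - B) / (B * (B * Q n - 1)))
    by (field; auto).
  rewrite Cmod_div, Cmod_mult by (apply Cmult_neq_0; auto). fold D g X.
  apply (Rmult_lt_reg_r (g * X)); [nra|].
  replace (D / (g * X) * (g * X))%R with D by (field; lra).
  replace D with (g * e * (D / (g * e)))%R at 1 by (field; lra).
  assert (Hge : (0 < g * e)%R) by nra. set (K := (D / (g * e))%R) in *. nra.
Qed.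

Lemma Cinv_0 : / 0 = 0.
Proof. unfold Cinv, Rdiv; simpl. rewrite Ropp_0, !Rmult_0_l. reflexivity. Qed.

Lemma Cdiv_cancel_r (x y c : C) : c <> 0 -> (x / c) / (y / c) = x / y.
Proof.
  intros Hc. destruct (Ceq_dec y 0) as [->|Hy].
  - unfold Cdiv. rewrite Cmult_0_l, !Cinv_0. ring.
  - field. auto.
Qed.

Lemma l_as_p m z : l m z = (p m (cpow z 2) - 1) / cpow z 2.
Proof. unfold l. now rewrite p_double. Qed.

Definition l_ratio_limit (z : C) (s : nat) : C :=
  (1 + cpow (cpow z 2) (2 ^ s)) / p (2 ^ s - 1) (cpow z 2).

Lemma l_ratio_lim z s : (1 < Cmod z)%R ->
  filterlim (fun n => l (2 ^ S s * n + 2 ^ s) z / l (2 ^ S s * n + 2 ^ s - 1) z)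
    eventually (locally (l_ratio_limit z s)).
Proof.
  intros Hz. unfold l_ratio_limit. set (w := cpow z 2).
  assert (Hw : (1 < Cmod w)%R) by (apply Cmod_cpow_gt_1; [lra | lia]).
  assert (Hw0 : w <> 0) by (intro E; rewrite E, Cmod_0 in Hw; lra).
  pose proof (Nat.pow_nonzero 2 s ltac:(lia)).
  assert (Hpred : p (2 ^ s - 1) w <> 0).
  { intro E. pose proof (p_pow2_pred s w) as Hp. rewrite E, Cmult_0_r in Hp.
    apply (Cminus_neq_0 (cpow w (2 ^ s)) 1); [|now rewrite <- Hp].
    rewrite Cmod_1. apply Cmod_cpow_gt_1; lia || lra. }
  apply filterlim_ext with (f := fun n =>
    ((1 + cpow w (2 ^ s)) * p n (cpow w (2 ^ S s)) - 1)
    / (p (2 ^ s - 1) w * p n (cpow w (2 ^ S s)) - 1)).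
  { intros n. rewrite !l_as_p, Cdiv_cancel_r by exact Hw0. fold w.
    rewrite <- Nat.add_sub_assoc, !p_dyadic, p_pow2 by (rewrite ?Nat.pow_succ_r'; lia).
    reflexivity. }
  apply filterlim_affine_ratio; [exact Hpred|].
  apply p_unbounded, Cmod_cpow_gt_1; [lra|]. apply Nat.neq_0_lt_0, Nat.pow_nonzero. lia.
Qed.

Lemma l_ratio_limit_F z s : (1 < Cmod z)%R ->
  l_ratio_limit z s = (cpow z 2 - 1) * F (S s) z / (F (S s) z - 2).
Proof.
  intros Hz. unfold l_ratio_limit, F.
  rewrite Nat.pow_succ_r', cpow_mul. set (w := cpow z 2). set (v := cpow w (2 ^ s)).
  assert (Hw : (1 < Cmod w)%R) by (apply Cmod_cpow_gt_1; [lra | lia]).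
  assert (Hw1 : w - 1 <> 0) by (apply Cminus_neq_0; rewrite Cmod_1; lra).
  assert (Hv1 : v - 1 <> 0).
  { apply Cminus_neq_0. rewrite Cmod_1. apply Cmod_cpow_gt_1; [lra|].
    apply Nat.neq_0_lt_0, Nat.pow_nonzero. lia. }
  assert (Hp : p (2 ^ s - 1) w = (v - 1) / (w - 1)).
  { pose proof (p_pow2_pred s w) as Hpred. fold v in Hpred.
    rewrite <- Hpred. field. exact Hw1. }
  rewrite Hp. replace (v + 1 - 2) with (v - 1) by ring.
  field. auto.
Qed.

Theorem mainTheorem17 (z : C) (t : nat) (hz : (1 < Cmod z)%R) (ht : (2 <= t)%nat) :
  filterlim
    (fun n : nat => l (2 ^ (t - 1) * n + 2 ^ (t - 2)) z
                    / l (2 ^ (t - 1) * n + 2 ^ (t - 2) - 1) z)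
    eventually
    (locally ((cpow z 2 - RtoC 1) * F (t - 1) z / (F (t - 1) z - RtoC 2)))
  /\ filterlim (fun n : nat => l (2 * n + 1) z / l (2 * n) z) eventually
       (locally (cpow z 2 + RtoC 1))
  /\ filterlim (fun n : nat => l (4 * n + 2) z / l (4 * n + 1) z) eventually
       (locally ((cpow z 4 + RtoC 1) / (cpow z 2 + RtoC 1)))
  /\ filterlim (fun n : nat => l (8 * n + 4) z / l (8 * n + 3) z) eventually
       (locally ((cpow z 8 + RtoC 1) / ((cpow z 4 + RtoC 1) * (cpow z 2 + RtoC 1)))).
Proof.
  split; [|split; [|split]].
  - replace (t - 1)%nat with (S (t - 2)) by lia.
    rewrite <- l_ratio_limit_F by exact hz. exact (l_ratio_lim z (t - 2) hz).
  - replace (cpow z 2 + RtoC 1) with (l_ratio_limit z 0)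
      by (unfold l_ratio_limit, p; simpl; field).
    eapply filterlim_ext; [|exact (l_ratio_lim z 0 hz)].
    intros n. cbv beta.
    now replace (2 ^ 1 * n + 2 ^ 0 - 1)%nat with (2 * n)%nat by (simpl; lia).
  - replace ((cpow z 4 + RtoC 1) / (cpow z 2 + RtoC 1)) with (l_ratio_limit z 1)
      by (unfold l_ratio_limit, p, Cdiv; simpl; f_equal; [|f_equal]; ring).
    eapply filterlim_ext; [|exact (l_ratio_lim z 1 hz)].
    intros n. cbv beta.
    now replace (2 ^ 2 * n + 2 ^ 1 - 1)%nat with (4 * n + 1)%nat by (simpl; lia).
  - replace ((cpow z 8 + RtoC 1) / ((cpow z 4 + RtoC 1) * (cpow z 2 + RtoC 1)))
      with (l_ratio_limit z 2)
      by (unfold l_ratio_limit, p, Cdiv; simpl; f_equal; [|f_equal]; ring).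
    eapply filterlim_ext; [|exact (l_ratio_lim z 2 hz)].
    intros n. cbv beta.
    now replace (2 ^ 3 * n + 2 ^ 2 - 1)%nat with (8 * n + 3)%nat by (simpl; lia).
Qed.
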